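(* Let $\alpha>0$ and $\beta>0$ be real numbers. A $2\times 2$ table $P=\begin{pmatrix} p_{00} & p_{01}\\ p_{10} & p_{11}\end{pmatrix}$ (i.e. $p_{ij}>0$ for all $i,j\in\{0,1\}$ and $p_{00}+p_{01}+p_{10}+p_{11}=1$) satisfies \[ \frac{p_{00}p_{11}}{p_{01}p_{10}}=\alpha^2 \quad\text{and}\quad \frac{p_{00}p_{10}}{p_{01}p_{11}}=\beta^2 \] if and only if there exists a real number $v$ with $0<v<\frac{1}{\alpha+\beta}$ such that \[ P=\begin{pmatrix} \frac{\beta}{\beta+\frac{1}{\alpha}}\,[1-(\beta+\alpha)v] & \frac{1}{\alpha\beta+1}\,[1-(\beta+\alpha)v]\\ \beta v & \alpha v\end{pmatrix}. \]
   Context: A $2\times 2$ table is a point of the open probability simplex $\Delta=\{(p_{ij})\in\mathbb{A}^4: \sum p_{ij}=1,\ p_{ij}>0\}$. The odds ratios are $r_\times=\frac{p_{00}p_{11}}{p_{01}p_{10}}$ and $r_{||}=\frac{p_{00}p_{10}}{p_{01}p_{11}}$, written as $r_\times=\alpha^2$, $r_{||}=\beta^2$ with $\alpha,\beta>0$. *)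

From Stdlib Require Import Reals.
Open Scope R_scope.

Definition is_table (p00 p01 p10 p11 : R) : Prop :=
  0 < p00 /\ 0 < p01 /\ 0 < p10 /\ 0 < p11 /\ p00 + p01 + p10 + p11 = 1.

(** Since all entries are positive, the two odds-ratio equations are
    equivalent to the linear relations [p00 = alpha beta p01] and
    [alpha p10 = beta p11]: their quotient gives [(alpha p10)^2 = (beta p11)^2]
    and their product gives [p00^2 = (alpha beta p01)^2].  The second relation
    says [(p10, p11) = v (beta, alpha)] for [v = p10 / beta]; the first one and
    [sum p_ij = 1] then force [(alpha beta + 1) p01 = 1 - (alpha + beta) v],
    and [p01 > 0] is exactly [v < 1 / (alpha + beta)]. *)

From Stdlib Require Import Reals Lra Psatz.
Open Scope R_scope.

Lemma pow2_inj_pos (x y : R) : 0 < x -> 0 < y -> x ^ 2 = y ^ 2 -> x = y.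
Proof.
  intros hx hy e. apply Rsqr_inj; try lra. unfold Rsqr. now rewrite <- !Rsqr_pow2 in e.
Qed.

Lemma Rlt_1_div_iff (c v : R) : 0 < c -> (v < 1 / c <-> c * v < 1).
Proof.
  intros hc. unfold Rdiv. rewrite Rmult_1_l. split; intros h.
  - apply (Rmult_lt_compat_l c) in h; [|lra]. now rewrite Rinv_r in h by lra.
  - apply (Rmult_lt_reg_l c); [lra|]. now rewrite Rinv_r by lra.
Qed.

Section OddsRatios.

Variables alpha beta p00 p01 p10 p11 : R.
Hypotheses (halpha : 0 < alpha) (hbeta : 0 < beta).
Hypotheses (h00 : 0 < p00) (h01 : 0 < p01) (h10 : 0 < p10) (h11 : 0 < p11).

Lemma odds_ratios_iff_linear :
  (p00 * p11 / (p01 * p10) = alpha ^ 2 /\ p00 * p10 / (p01 * p11) = beta ^ 2)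
  <-> (p00 = alpha * beta * p01 /\ alpha * p10 = beta * p11).
Proof.
  split.
  - intros [ea eb].
    assert (ra : p00 * p11 = alpha ^ 2 * (p01 * p10)) by (rewrite <- ea; field; lra).
    assert (rb : p00 * p10 = beta ^ 2 * (p01 * p11)) by (rewrite <- eb; field; lra).
    assert (sq0 : p00 ^ 2 = (alpha * beta * p01) ^ 2).
    { apply (Rmult_eq_reg_r (p10 * p11)); [|nra].
      replace (p00 ^ 2 * (p10 * p11)) with ((p00 * p11) * (p00 * p10)) by ring.
      rewrite ra, rb. ring. }
    assert (sq1 : (alpha * p10) ^ 2 = (beta * p11) ^ 2).
    { apply (Rmult_eq_reg_r p01); [|lra].
      replace ((alpha * p10) ^ 2 * p01) with (alpha ^ 2 * (p01 * p10) * p10) by ring.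
      rewrite <- ra.
      replace (p00 * p11 * p10) with (p00 * p10 * p11) by ring.
      rewrite rb. ring. }
    split; apply pow2_inj_pos; auto; apply Rmult_lt_0_compat; nra.
  - intros [e0 e1]. subst p00.
    assert (e11 : p11 = alpha * p10 / beta) by (rewrite e1; field; lra).
    rewrite e11. split; field; repeat split; lra.
Qed.

End OddsRatios.

Lemma param_of_linear (alpha beta p00 p01 p10 p11 : R) :
  0 < alpha -> 0 < beta -> is_table p00 p01 p10 p11 ->
  p00 = alpha * beta * p01 -> alpha * p10 = beta * p11 ->
  exists v : R, 0 < v /\ v < 1 / (alpha + beta) /\
     p00 = beta / (beta + 1 / alpha) * (1 - (beta + alpha) * v) /\
     p01 = 1 / (alpha * beta + 1) * (1 - (beta + alpha) * v) /\
     p10 = beta * v /\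
     p11 = alpha * v.
Proof.
  intros halpha hbeta [h00 [h01 [h10 [h11 hsum]]]] e0 e1.
  set (v := p10 / beta).
  assert (e10 : p10 = beta * v) by (unfold v; field; lra).
  assert (e11 : p11 = alpha * v).
  { apply (Rmult_eq_reg_l beta); [|lra]. rewrite <- e1, e10. ring. }
  assert (e01 : (alpha * beta + 1) * p01 = 1 - (beta + alpha) * v) by lra.
  exists v. repeat split.
  - unfold v. apply Rdiv_lt_0_compat; lra.
  - apply Rlt_1_div_iff; nra.
  - rewrite <- e01, e0. field. split; nra.
  - rewrite <- e01. field. nra.
  - exact e10.
  - exact e11.
Qed.

Lemma linear_of_param (alpha beta v p00 p01 p10 p11 : R) :
  0 < alpha -> 0 < beta ->
  p00 = beta / (beta + 1 / alpha) * (1 - (beta + alpha) * v) ->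
  p01 = 1 / (alpha * beta + 1) * (1 - (beta + alpha) * v) ->
  p10 = beta * v -> p11 = alpha * v ->
  p00 = alpha * beta * p01 /\ alpha * p10 = beta * p11.
Proof.
  intros halpha hbeta -> -> -> ->. split; [field; split; nra | ring].
Qed.

Theorem proposition2p2 (alpha beta : R) (halpha : 0 < alpha) (hbeta : 0 < beta)
  (p00 p01 p10 p11 : R) (hP : is_table p00 p01 p10 p11) :
  (p00 * p11 / (p01 * p10) = alpha ^ 2 /\ p00 * p10 / (p01 * p11) = beta ^ 2)
  <->
  (exists v : R, 0 < v /\ v < 1 / (alpha + beta) /\
     p00 = beta / (beta + 1 / alpha) * (1 - (beta + alpha) * v) /\
     p01 = 1 / (alpha * beta + 1) * (1 - (beta + alpha) * v) /\
     p10 = beta * v /\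
     p11 = alpha * v).
Proof.
  pose proof hP as [h00 [h01 [h10 [h11 _]]]].
  rewrite odds_ratios_iff_linear by assumption.
  split.
  - intros [e0 e1]. now apply param_of_linear.
  - intros (v & _ & _ & e00 & e01 & e10 & e11).
    now apply (linear_of_param alpha beta v).
Qed.
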